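(* Let $G$ be a finite group and $H$ a subgroup such that $\mathcal{O}_G(H)$ is Boolean of rank $\ell$, with atoms $A_1,\ldots,A_\ell$. If $|A_i:H|\ge2^i$ for each $i\in\{1,\ldots,\ell\}$, then $\hat\varphi(H,G)\ge2^{\ell-1}$.
   Context: $\mathcal{O}_G(H)=\{K\mid H\le K\le G\}$; Boolean of rank $\ell$ means isomorphic to the lattice of subsets of an $\ell$-set; atoms are the minimal elements of $\mathcal{O}_G(H)\setminus\{H\}$. The dual Euler totient is $\hat\varphi(H,G)=\sum_{K\in\mathcal{O}_G(H)}\mu(H,K)|G:K|$ where $\mu$ is the Möbius function of $\mathcal{O}_G(H)$. *)

From mathcomp Require Import all_boot all_order all_algebra all_fingroup.
Set Implicit Arguments. Unset Strict Implicit. Unset Printing Implicit Defensive.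
Import GRing.Theory Num.Theory.
Open Scope group_scope.

Section Defs.
Variable gT : finGroupType.

Definition overgroups (H G : {group gT}) : {set {group gT}} :=
  [set K : {group gT} | (H \subset K) && (K \subset G)].

Definition boolean_of_rank (H G : {group gT}) (l : nat) : Prop :=
  exists f : {set 'I_l} -> {group gT},
    [/\ forall X, f X \in overgroups H G,
        forall K, K \in overgroups H G -> exists X, f X = K
      & forall X Y, (f X \subset f Y) = (X \subset Y)].

Definition is_atom (H G K : {group gT}) : Prop :=
  [/\ K \in overgroups H G, K != H &
      forall L : {group gT}, L \in overgroups H G -> L != H ->
        L \subset K -> L = K].

(* Moebius function mu(H, K) of the subgroup poset, by the standard
   recursion mu(H,H) = 1, mu(H,K) = - sum_{H <= L < K} mu(H,L);
   the fuel n bounds the recursion depth (orders strictly decrease). *)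
Fixpoint mobius_rec (n : nat) (H K : {group gT}) : int :=
  match n with
  | 0 => 0
  | n'.+1 =>
      if K == H then 1
      else if H \subset K then
        - \sum_(L : {group gT} | (H \subset L) && (L \proper K))
            mobius_rec n' H L
      else 0
  end%R.

Definition mobius (H K : {group gT}) : int := mobius_rec #|K|.+1 H K.

Definition dual_totient (H G : {group gT}) : int :=
  (\sum_(K in overgroups H G) mobius H K * (#|G : K|)%:Z)%R.

End Defs.

(* Through the lattice isomorphism X |-> K_X with the subsets of the atoms,
   mu(H, K_X) = (-1)^|X|, so hat-phi(H, G) is the alternating sum of
   n(X) = |G : K_X|.  For j not in X the subgroups K_X and A_j meet in H, so
   |K_(X+j)| >= |K_X| |A_j : H| and n(X) >= 2^(j+1) n(X+j).  Forming the
   alternating sum one atom at a time in increasing index order, the partial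
   sums S_m(X) stay between n(X)/2^m and n(X); hence hat-phi >= n(0)/2^l, and
   n(0) >= 2^(l(l+1)/2) n(all) >= 2^(2l-1). *)

From mathcomp Require Import all_boot all_order all_algebra all_fingroup.
From mathcomp Require Import zify.
Set Implicit Arguments. Unset Strict Implicit. Unset Printing Implicit Defensive.
Import Order.TTheory GRing.Theory Num.Theory.
Local Open Scope ring_scope.

Lemma sum_subsetU1 (R : nmodType) (T : finType) (A : {set T}) (x : T)
    (F : {set T} -> R) : x \notin A ->
  \sum_(Z : {set T} | Z \subset x |: A) F Z =
    \sum_(Z : {set T} | Z \subset A) F Z +
    \sum_(Z : {set T} | Z \subset A) F (x |: Z).
Proof.
move=> xA; rewrite (bigID (fun Z : {set T} => x \in Z)) [LHS]addrC /=.
congr (_ + _).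
  by apply: eq_bigl => Z; rewrite -[in RHS](setU1K xA) subsetD1.
rewrite (reindex_onto (fun Z => x |: Z) (fun Z => Z :\ x)) /=; last first.
  by move=> Z /andP[_ xZ]; rewrite setD1K.
apply: eq_bigl => Z; rewrite setU11 andbT.
apply/andP/idP => [[sxZ /eqP <-] | sZA].
  by rewrite -[A](setU1K xA) setSD.
have xZ : x \notin Z := contra (subsetP sZA x) xA.
by rewrite setUS // setU1K.
Qed.

Lemma sum_subset_sign_eq0 (R : pzRingType) (T : finType) (X : {set T}) :
  X != set0 -> \sum_(Y : {set T} | Y \subset X) (-1) ^+ #|Y| = 0 :> R.
Proof.
case/set0Pn=> x xX; rewrite -(setD1K xX) sum_subsetU1 ?setD11 //.
rewrite [X in _ + X](eq_bigr (fun Y : {set T} => - (-1) ^+ #|Y|)).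
  by rewrite sumrN subrr.
move=> Y sYX.
have xY : x \notin Y := contraFN (subsetP sYX x) (setD11 x X).
by rewrite cardsU1 xY exprS mulN1r.
Qed.

Section PrefixAlternatingSums.

Variables (l : nat) (n : {set 'I_l} -> int).
Hypothesis n_gt0 : forall X, 0 < n X.
Hypothesis n_step : forall (X : {set 'I_l}) (j : 'I_l),
  j \notin X -> 2 ^+ j.+1 * n (j |: X) <= n X.

Definition prefix (m : nat) : {set 'I_l} := [set i : 'I_l | (i < m)%N].

Definition prefix_alt_sum (m : nat) (X : {set 'I_l}) : int :=
  \sum_(Z : {set 'I_l} | Z \subset prefix m) (-1) ^+ #|Z| * n (X :|: Z).

Lemma prefix0 : prefix 0 = set0.
Proof. by apply/setP=> i; rewrite !inE. Qed.

Lemma prefixS (j : 'I_l) : prefix j.+1 = j |: prefix j.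
Proof. by apply/setP=> i; rewrite !inE ltnS leq_eqVlt. Qed.

Lemma notin_prefix (j : 'I_l) : j \notin prefix j.
Proof. by rewrite inE ltnn. Qed.

Lemma prefix_alt_sum0 X : prefix_alt_sum 0 X = n X.
Proof.
rewrite /prefix_alt_sum prefix0 (eq_bigl (pred1 set0)) => [|Z]; last first.
  by rewrite subset0.
by rewrite big_pred1_eq cards0 mul1r setU0.
Qed.

Lemma prefix_alt_sumS (j : 'I_l) X :
  prefix_alt_sum j.+1 X = prefix_alt_sum j X - prefix_alt_sum j (j |: X).
Proof.
rewrite /prefix_alt_sum prefixS sum_subsetU1 ?notin_prefix // -sumrN.
congr (_ + _); apply: eq_bigr => Z sZj.
have jZ : j \notin Z := contra (subsetP sZj j) (notin_prefix j).
by rewrite cardsU1 jZ add1n exprS mulN1r mulNr setUCA setUA.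
Qed.

Lemma prefix_alt_sum_bounds m (X : {set 'I_l}) :
    (m <= l)%N -> (forall i, i \in X -> m <= i)%N ->
  n X <= 2 ^+ m * prefix_alt_sum m X /\ prefix_alt_sum m X <= n X.
Proof.
elim: m X => [|m IHm] X lt_m_l geX.
  by rewrite prefix_alt_sum0 mul1r.
pose j := Ordinal lt_m_l.
have jX : j \notin X by apply/negP => /geX; rewrite ltnn.
have [lo1 up1] := IHm X (ltnW lt_m_l) (fun i Xi => ltnW (geX i Xi)).
have [lo2 up2] : n (j |: X) <= 2 ^+ m * prefix_alt_sum m (j |: X) /\
                 prefix_alt_sum m (j |: X) <= n (j |: X).
  by apply: IHm (ltnW lt_m_l) _ => i /setU1P[-> | /geX /ltnW].
have step := n_step jX; have pos := n_gt0 (j |: X).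
rewrite [j.+1]/= exprS -mulrA in step.
rewrite (prefix_alt_sumS j) exprS -mulrA; change (nat_of_ord j) with m.
have exp_gt0 : 0 < 2 ^+ m :> int by rewrite exprn_gt0.
split; nia.
Qed.

Lemma prefix_chain k : (k <= l)%N -> 2 ^+ 'C(k.+1, 2) * n (prefix k) <= n set0.
Proof.
elim: k => [|k IHk] lt_k_l; first by rewrite prefix0 mul1r.
pose j := Ordinal lt_k_l.
have step := n_step (notin_prefix j); rewrite -prefixS in step.
rewrite binS bin1 exprD -mulrA; apply: le_trans (IHk (ltnW lt_k_l)).
by rewrite ler_wpM2l ?exprn_ge0.
Qed.

Lemma double_leq_bin2S k : (2 * k <= 'C(k.+1, 2).+1)%N.
Proof. by elim: k => // k IHk; rewrite binS bin1; lia. Qed.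

Theorem exp2_le_double_alt_sum :
  2 ^+ l <= 2 * \sum_(X : {set 'I_l}) (-1) ^+ #|X| * n X.
Proof.
have prefixT : prefix l = setT by apply/setP => i; rewrite !inE ltn_ord.
have -> : \sum_(X : {set 'I_l}) (-1) ^+ #|X| * n X = prefix_alt_sum l set0.
  rewrite /prefix_alt_sum prefixT.
  by apply: eq_big => [X | X _]; rewrite ?subsetT ?set0U.
have [|lower _] := @prefix_alt_sum_bounds l set0 (leqnn l).
  by move=> i; rewrite inE.
have chain := prefix_chain (leqnn l); rewrite prefixT in chain.
have exp_le : 2 ^+ l * 2 ^+ l <= 2 * 2 ^+ 'C(l.+1, 2) :> int.
  by rewrite -exprD -exprS ler_eXn2l // addnn -mul2n double_leq_bin2S.
have top := n_gt0 setT.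
have exp_gt0 : 0 < 2 ^+ l :> int by rewrite exprn_gt0.
have exp_bin_gt0 : 0 < 2 ^+ 'C(l.+1, 2) :> int by rewrite exprn_gt0.
nia.
Qed.

End PrefixAlternatingSums.

Section Mobius.

Variable gT : finGroupType.
Implicit Types H K L : {group gT}.

Lemma in_overgroups H G K :
  (K \in overgroups H G) = (H \subset K) && (K \subset G).
Proof. by rewrite inE. Qed.

Lemma mobius_rec_fuel H K m m' : (#|K| < m)%N -> (#|K| < m')%N ->
  mobius_rec m H K = mobius_rec m' H K.
Proof.
elim: m m' K => [|m IHm] [|m'] K //= ltKm ltKm'.
do 2 case: ifP => // _; congr (- _); apply: eq_bigr => L /andP[_ ltLK].
by have ltLK' := proper_card ltLK; apply: IHm; apply: leq_trans ltLK' _.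
Qed.

Lemma mobiusE H K : mobius H K =
  if K == H then 1 else if H \subset K then
    - \sum_(L : {group gT} | (H \subset L) && (L \proper K)) mobius H L
  else 0.
Proof.
rewrite /mobius /=; do 2 case: ifP => // _; congr (- _).
apply: eq_bigr => L /andP[_ /proper_card ltLK].
exact: mobius_rec_fuel ltLK (ltnSn _).
Qed.

End Mobius.

Lemma mul_card_indexg_leq (gT : finGroupType) (B C D : {group gT}) :
  (B \subset D)%g -> (C \subset D)%g -> (#|B| * #|C : B| <= #|D|)%N.
Proof.
move=> sBD sCD.
have idxC : (#|C : B| * #|B :&: C| = #|C|)%N.
  by rewrite -indexgI setIC mulnC Lagrange ?subsetIr.
rewrite -(@leq_pmul2r #|B :&: C|) ?cardG_gt0 // -mulnA idxC mul_cardG.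
by rewrite leq_pmul2r ?cardG_gt0 // subset_leq_card ?mul_subG.
Qed.

Lemma mul_indexg_leq (gT : finGroupType) (B C D G : {group gT}) :
    (B \subset D)%g -> (C \subset D)%g -> (D \subset G)%g ->
  (#|C : B| * #|G : D| <= #|G : B|)%N.
Proof.
move=> sBD sCD sDG; rewrite -(@leq_pmul2l #|B|) ?cardG_gt0 //.
rewrite (Lagrange (subset_trans sBD sDG)) -(Lagrange sDG) mulnA.
by rewrite leq_pmul2r ?indexg_gt0 // mul_card_indexg_leq.
Qed.

Section BooleanOvergroups.

Variables (gT : finGroupType) (G H : {group gT}) (l : nat).
Variable f : {set 'I_l} -> {group gT}.
Implicit Types (X Y : {set 'I_l}) (K L : {group gT}).
Hypothesis sHG : (H \subset G)%g.
Hypothesis f_over : forall X, f X \in overgroups H G.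
Hypothesis f_onto : forall K, K \in overgroups H G -> exists X, f X = K.
Hypothesis f_mono : forall X Y, (f X \subset f Y)%g = (X \subset Y).

Lemma f_sub X : (H \subset f X)%g /\ (f X \subset G)%g.
Proof. by have := f_over X; rewrite in_overgroups => /andP. Qed.

Lemma f_inj : injective f.
Proof. by move=> X Y eqf; apply/eqP; rewrite eqEsubset -!f_mono eqf subxx. Qed.

Lemma f_proper X Y : (f X \proper f Y)%g = (X \proper Y).
Proof. by rewrite !properE !f_mono. Qed.

Lemma f_set0 : f set0 = H.
Proof.
have [X fX] : exists X, f X = H.
  by apply: f_onto; rewrite in_overgroups subxx sHG.
by apply/val_inj/eqP; rewrite eqEsubset (f_sub set0).1 andbT -fX f_mono sub0set.
Qed.

Lemma f_setI X Y : f (X :&: Y) = (f X :&: f Y)%G.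
Proof.
have [Z fZ] : exists Z, f Z = (f X :&: f Y)%G.
  apply: f_onto; rewrite in_overgroups subsetI !(f_sub _).1.
  by rewrite subIset ?(f_sub _).2.
have [sZX sZY] : Z \subset X /\ Z \subset Y.
  by rewrite -!f_mono fZ subsetIl subsetIr.
rewrite -fZ; congr f; apply/eqP; rewrite eqEsubset subsetI sZX sZY andbT.
by rewrite -f_mono fZ subsetI !f_mono subsetIl subsetIr.
Qed.

Lemma overgroups_boolean : overgroups H G = f @: setT.
Proof.
apply/setP => K; apply/idP/imsetP => [/f_onto[X <-] | [X _ ->]].
  by exists X.
exact: f_over.
Qed.

Lemma mobius_boolean X : mobius H (f X) = (-1) ^+ #|X|.
Proof.
have [k] := ubnP #|X|; elim: k X => // k IHk X; rewrite ltnS => leXk.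
rewrite mobiusE.
have [-> | X0] := eqVneq X set0; first by rewrite f_set0 eqxx cards0.
rewrite -f_set0 (inj_eq f_inj) (negbTE X0) f_set0 (f_sub X).1.
have below_fX : forall L : {group gT}, (H \subset L)%g && (L \proper f X)%g =
    (L \in f @: [set Y : {set 'I_l} | Y \proper X]).
  move=> L; apply/andP/imsetP => [[sHL ltLX] | [Y]]; last first.
    by rewrite inE -f_proper => ltYX ->; rewrite (f_sub Y).1.
  have [|Y fY] := f_onto (K := L).
    by rewrite in_overgroups sHL (subset_trans (proper_sub ltLX)) ?(f_sub X).2.
  by exists Y; rewrite // inE -f_proper fY.
rewrite (eq_bigl _ _ below_fX) big_imset /=; last exact: in2W f_inj.
rewrite (eq_bigr (fun Y : {set 'I_l} => (-1) ^+ #|Y|)) => [|Y]; last first.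
  rewrite inE => /proper_card ltYX.
  by apply: IHk; apply: leq_trans ltYX leXk.
have := sum_subset_sign_eq0 int X0.
rewrite (bigD1 X) //= => /eqP; rewrite addr_eq0 => /eqP ->.
by congr (- _); apply: eq_bigl => Y; rewrite inE properEneq andbC.
Qed.

Lemma dual_totient_boolean :
  dual_totient H G = \sum_(X : {set 'I_l}) (-1) ^+ #|X| * #|G : f X|%:Z.
Proof.
rewrite /dual_totient overgroups_boolean big_imset; last exact: in2W f_inj.
by apply: eq_big => [X | X _]; rewrite ?in_setT ?mobius_boolean.
Qed.

Lemma atom_boolean K : is_atom H G K -> exists j, f [set j] = K.
Proof.
case=> /f_onto[X <-] neH minK.
have /set0Pn[j Xj] : X != set0 by apply: contraNneq neH => ->; rewrite f_set0.
exists j; apply: minK; rewrite ?f_over ?f_mono ?sub1set //.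
by rewrite -f_set0 (inj_eq f_inj) -cards_eq0 cards1.
Qed.

Lemma indexg_boolean_step X j : j \notin X ->
  (#|f [set j] : H| * #|G : f (j |: X)| <= #|G : f X|)%N.
Proof.
move=> jX; have -> : H = (f [set j] :&: f X)%G.
  by rewrite -f_setI disjoint_setI0 ?disjoints1 ?f_set0.
rewrite indexgI mul_indexg_leq ?f_mono ?subsetUl ?subsetUr //.
exact: (f_sub _).2.
Qed.

End BooleanOvergroups.

Theorem lemma10p11 (gT : finGroupType) (G H : {group gT}) (l : nat)
    (A : 'I_l -> {group gT}) :
  (H \subset G)%g ->
  boolean_of_rank H G l ->
  injective A ->
  (forall K : {group gT}, is_atom H G K <-> exists i, A i = K) ->
  (forall i : 'I_l, 2 ^ i.+1 <= #|A i : H|%g)%N ->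
  ((2 ^+ l : int) <= 2 * dual_totient H G)%R.
Proof.
move=> sHG [f [f_over f_onto f_mono]] injA atomA idxA.
have /fin_all_exists[tau f_tau] : forall i, exists j, f [set j] = A i.
  move=> i; apply: (atom_boolean sHG f_over f_onto f_mono).
  by apply/atomA; exists i.
have tau_inj : injective tau.
  by move=> i j eq_tau; apply: injA; rewrite -!f_tau eq_tau.
pose n (X : {set 'I_l}) : int := #|G : f (tau @: X)|%:Z.
have n_gt0 (X : {set 'I_l}) : 0 < n X by rewrite ltz_nat indexg_gt0.
have n_step (X : {set 'I_l}) (j : 'I_l) :
    j \notin X -> 2 ^+ j.+1 * n (j |: X) <= n X.
  move=> jX; have tjX : tau j \notin tau @: X by rewrite mem_imset.
  rewrite /n imsetU1 -natrX natz -PoszM lez_nat.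
  apply: leq_trans (indexg_boolean_step sHG f_over f_onto f_mono tjX).
  by rewrite leq_mul2r f_tau idxA orbT.
rewrite (dual_totient_boolean sHG f_over f_onto f_mono).
rewrite (reindex_inj (imset_inj tau_inj)).
under eq_bigr do rewrite card_imset //.
exact: exp2_le_double_alt_sum n_gt0 n_step.
Qed.
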